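(* For any toric poset $P=P(G,[\omega])$, \[E\big(\hat G^{\mathrm{Hasse}}(P(G,\omega))\big)\subseteq E\big(\hat G^{\mathrm{torHasse}}(P(G,[\omega]))\big)\subseteq E\big(\bar G^{\mathrm{tor}}(P)\big)=\bigcap_{\omega'\in[\omega]}E\big(\bar G(P(G,\omega'))\big),\] where $E(\cdot)$ denotes edge sets.
   Context: Toric poset setup: $G=(V,E)$ finite simple graph, $V=[n]$; $\mathrm{Acyc}(G)$ acyclic orientations; $P(G,\omega)$ the poset given by the transitive closure of $\omega$; $[\omega]$ the class under the equivalence generated by converting a source into a sink; the toric graphic arrangement $\mathcal{A}_{\mathrm{tor}}(H)$ of a graph $H$ on $V$ consists of the hyperplanes $H^{\mathrm{tor}}_{ij}=\{x\in\mathbb{R}^V/\mathbb{Z}^V:x_i\equiv x_j\bmod 1\}$, $\{i,j\}\in E(H)$; its chambers correspond bijectively to classes $[\omega]$, $\omega\in\mathrm{Acyc}(H)$, and $P(G,[\omega])$ is identified with its chamber $c(P)$. For an ordinary poset $Q$: $\hat G^{\mathrm{Hasse}}(Q)$ is its Hasse diagram (edges the cover relations) and $\bar G(Q)$ its transitive closure graph (edges $\{i,j\}$ with $i,j$ comparable). Toric transitive closure $\bar G^{\mathrm{tor}}(P)$: the graph with edge set $E$ together with all $\{i,j\}$ such that $H^{\mathrm{tor}}_{ij}\cap c(P)=\emptyset$. Toric Hasse diagram $\hat G^{\mathrm{torHasse}}(P)$: the unique graph on $V$ such that for every graph $H$ on $V$, $c(P)$ is a chamber of $\mathcal{A}_{\mathrm{tor}}(H)$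 iff $E(\hat G^{\mathrm{torHasse}}(P))\subseteq E(H)\subseteq E(\bar G^{\mathrm{tor}}(P))$ (its existence and uniqueness are known). *)

From Stdlib Require Import Reals Relations.
From mathcomp Require Import all_boot.
Set Implicit Arguments. Unset Strict Implicit. Unset Printing Implicit Defensive.

Definition simple_graph n (g : rel 'I_n) : Prop :=
  (forall i j, g i j = g j i) /\ (forall i, g i i = false).

Definition orientation n (g : rel 'I_n) (o : rel 'I_n) : Prop :=
  (forall i j, o i j -> g i j) /\
  (forall i j, g i j -> (o i j || o j i)) /\
  (forall i j, ~~ (o i j && o j i)).

(* Strict order of the poset P(G,o): transitive closure of o. *)
Definition plt n (o : rel 'I_n) (i j : 'I_n) : Prop :=
  exists k, o i k /\ connect o k j.

Definition acyclic_orientation n (g o : rel 'I_n) : Prop :=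
  orientation g o /\ forall i, ~ plt o i i.

Definition flip_source n (o o' : rel 'I_n) : Prop :=
  exists v : 'I_n, (forall u, o u v = false) /\
    forall i j, o' i j = (if (i == v) || (j == v) then o j i else o i j).

Definition toric_equiv n (o o' : rel 'I_n) : Prop :=
  clos_refl_sym_trans (rel 'I_n) (@flip_source n) o o'.

Definition covers n (o : rel 'I_n) (i j : 'I_n) : Prop :=
  plt o i j /\ ~ (exists k, plt o i k /\ plt o k j).
Definition hasse_edge n (o : rel 'I_n) (i j : 'I_n) : Prop :=
  covers o i j \/ covers o j i.

Definition comp_edge n (o : rel 'I_n) (i j : 'I_n) : Prop :=
  plt o i j \/ plt o j i.

(* Points of the torus are represented by their lifts x : 'I_n -> R;
   subsets of the torus by Z^n-invariant predicates on R^n. *)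
Definition is_int (r : R) : Prop := exists z : Z, r = IZR z.

Definition congr_torus n (x y : 'I_n -> R) : Prop := forall i, is_int (Rminus (x i) (y i)).

Definition on_hyp n (i j : 'I_n) (x : 'I_n -> R) : Prop := is_int (Rminus (x i) (x j)).

Definition off_arr n (h : rel 'I_n) (x : 'I_n -> R) : Prop :=
  forall i j, h i j -> ~ on_hyp i j x.

(* x and y (in the torus) lie in the same connected component of the complement of A_tor(h):
   there is a continuous path in R^n from x to a lift of y avoiding the (lifted) arrangement.
   (Paths in the torus lift to paths in R^n.) *)
Definition same_chamber n (h : rel 'I_n) (x y : 'I_n -> R) : Prop :=
  exists gam : R -> 'I_n -> R,
    (forall i, continuity (fun t => gam t i)) /\
    gam R0 = x /\ congr_torus (gam R1) y /\
    (forall t, Rle R0 t -> Rle t R1 -> off_arr h (gam t)).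

Definition is_chamber n (h : rel 'I_n) (C : ('I_n -> R) -> Prop) : Prop :=
  exists x, off_arr h x /\ forall y, C y <-> same_chamber h x y.

(* The chamber c(P) of A_tor(G) attached to the toric poset P(G,[o]): the chamber containing
   the points x in [0,1)^V (off A_tor(G)) whose induced orientation (i -> j iff x_i < x_j
   on edges) is o.  Points with this property form a convex set, hence one chamber. *)
Definition toric_chamber n (g o : rel 'I_n) (y : 'I_n -> R) : Prop :=
  exists x : 'I_n -> R,
    (forall i, Rle R0 (x i) /\ Rlt (x i) R1) /\ off_arr g x /\
    (forall i j, g i j -> (o i j <-> Rlt (x i) (x j))) /\
    same_chamber g x y.

Definition tor_closure_edge n (g o : rel 'I_n) (i j : 'I_n) : Prop :=
  g i j \/ (i != j /\ forall y, toric_chamber g o y -> ~ on_hyp i j y).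

Definition is_tor_hasse n (g o K : rel 'I_n) : Prop :=
  simple_graph K /\
  forall H : rel 'I_n, simple_graph H ->
    (is_chamber H (toric_chamber g o) <->
      ((forall i j, K i j -> H i j) /\ (forall i j, H i j -> tor_closure_edge g o i j))).

(* A point lies in the chamber
   c(P) of P(G,[o]) iff some integer translate of it rises by less than one unit along every
   arc of o, a description that source-to-sink flips preserve.  Conversely, the fractional
   part of such a lift induces an orientation toric-equivalent to o.

   If i and j are incomparable for some o' in [o], the heights in o' relative to the antichain
   {i, j} give a point of c(P) on the hyperplane x_i = x_j.  If c(P) meets that hyperplane at
   y, the fractional part of a lift of y has equal i- and j-coordinates and induces an o' in
   [o], in which i and j are therefore incomparable.

   Taking H = G shows that the toric Hasse diagram lies in G.  If j covers i in o but {i, j}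
   is not an edge of it, then c(P) is also a chamber of G minus {i, j}.  Start from a point
   of c(P) at which no coordinate lies between x_i and x_j and slide x_j onto x_i: this stays
   in that chamber but leaves c(P). *)

From Stdlib Require Import Reals Relations Lra Lia ZArith FunctionalExtensionality Classical.
From mathcomp Require Import all_boot.
Set Implicit Arguments. Unset Strict Implicit. Unset Printing Implicit Defensive.

Section StrictOrder.
Variables (n : nat) (o : rel 'I_n).

Lemma connect_cases x y : connect o x y -> x = y \/ exists2 z, o x z & connect o z y.
Proof.
case/connectP => [[|z p]] /= => [_ ->|/andP [oxz pz] ->]; first by left.
by right; exists z => //; apply/connectP; exists p.
Qed.

Lemma rel_plt i j : o i j -> plt o i j.
Proof. by exists j. Qed.

Lemma plt_connect i j : plt o i j -> connect o i j.
Proof. by case=> k [oik ckj]; apply: connect_trans (connect1 oik) ckj. Qed.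

Lemma connect_plt_trans i k j : connect o i k -> plt o k j -> plt o i j.
Proof.
case/connect_cases => [-> //|[z oiz czk] pkj].
by exists z; split => //; apply: connect_trans czk (plt_connect pkj).
Qed.

Lemma connect_neq_plt i j : connect o i j -> i != j -> plt o i j.
Proof. by case/connect_cases => [->|[z oiz czj]]; [rewrite eqxx | exists z]. Qed.

Lemma covers_rel i j : covers o i j -> o i j.
Proof.
case=> [[k [oik ckj]] no_mid]; case: (eqVneq k j) oik => [-> //|kj oik].
by case: no_mid; exists k; split; [exact: rel_plt | exact: connect_neq_plt].
Qed.

Definition antichain (A : {set 'I_n}) := forall t s, t \in A -> s \in A -> ~ plt o t s.

Lemma antichain0 : antichain set0.
Proof. by move=> t s; rewrite inE. Qed.

Hypothesis o_acyclic : forall i, ~ plt o i i.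

Lemma antichain2 i j : ~ comp_edge o i j -> antichain [set i; j].
Proof.
move=> incomp t s; rewrite !inE => /orP [] /eqP -> /orP [] /eqP -> lt_ts;
  by [exact: o_acyclic lt_ts | apply: incomp; left | apply: incomp; right].
Qed.

(* The height of k relative to an antichain A counts the elements below k, together with
   everything below A as soon as k lies above some element of A; this makes all of A
   equally high. *)
Definition height_set (A : {set 'I_n}) k : {set 'I_n} :=
  [set m | connect o m k || [exists t in A, connect o t k] && [exists s in A, connect o m s]].

Definition height A k := #|height_set A k|.

Lemma height_lt (A : {set 'I_n}) u v : antichain A -> o u v -> (height A u < height A v)%N.
Proof.
move=> anti ouv; apply/proper_card/properP; split.
  apply/subsetP => m; rewrite !inE => /orP [cmu|/andP [/existsP [t /andP [tA ctu]] ->]].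
    by rewrite (connect_trans cmu (connect1 ouv)).
  rewrite andbT; apply/orP; right; apply/existsP; exists t.
  by rewrite tA (connect_trans ctu (connect1 ouv)).
exists v; first by rewrite inE connect0.
rewrite inE negb_or; apply/andP; split.
  by apply/negP => cvu; apply: (o_acyclic (i := u)); exists v.
apply/negP => /andP [/existsP [t /andP [tA ctu]] /existsP [s /andP [sA cvs]]].
by apply: (anti t s tA sA); apply: (connect_plt_trans ctu); exists v.
Qed.

Lemma height_le (A : {set 'I_n}) k : (height A k <= n)%N.
Proof. by rewrite -[n]card_ord max_card. Qed.

Lemma height_eq (A : {set 'I_n}) i j : i \in A -> j \in A -> height A i = height A j.
Proof.
move=> iA jA; rewrite /height (_ : height_set A i = height_set A j) //.
apply/setP => m; rewrite !inE.
have -> : [exists t in A, connect o t i] by apply/existsP; exists i; rewrite iA connect0.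
have -> : [exists t in A, connect o t j] by apply/existsP; exists j; rewrite jA connect0.
case cmi: (connect o m i); case cmj: (connect o m j) => //=.
  by symmetry; apply/existsP; exists i; rewrite iA cmi.
by apply/existsP; exists j; rewrite jA cmj.
Qed.

Section CoverRank.
Variables i j : 'I_n.
Hypothesis ij_cover : covers o i j.

Definition cover_level k : nat :=
  if ~~ connect o i k then 0 else if k == i then 1 else if k == j then 2 else 3.

(* Ranking by level first and by height second is increasing along o and ranks no other
   element between i and j. *)
Definition cover_rank k := cover_level k * n.+1 + height set0 k.

Lemma cover_level_mono u v : o u v -> (cover_level u <= cover_level v)%N.
Proof.
move=> ouv; rewrite /cover_level; case ciu: (connect o i u) => //=.
have vi : v != i by apply/eqP => vi; subst v; apply: (o_acyclic (i := u)); exists i.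
rewrite (connect_trans ciu (connect1 ouv)) (negbTE vi) /=.
case: (eqVneq u i) => [_|ui]; first by case: (v == j).
case: (eqVneq u j) => [_|uj]; first by case: (v == j).
case: (eqVneq v j) => // vj; subst v; case: ij_cover => _ []; exists u.
by split; [apply: connect_neq_plt; rewrite // eq_sym | exact: rel_plt].
Qed.

Lemma cover_rank_lt_level a b :
  (cover_level a < cover_level b)%N -> (cover_rank a < cover_rank b)%N.
Proof.
move=> lev_ab; apply: leq_trans (leq_addr (height set0 b) _).
apply: (@leq_trans ((cover_level a).+1 * n.+1)).
  by rewrite mulSnr ltn_add2l ltnS height_le.
by rewrite leq_mul2r lev_ab orbT.
Qed.

Lemma cover_rank_lt u v : o u v -> (cover_rank u < cover_rank v)%N.
Proof.
move=> ouv; rewrite /cover_rank -addnS leq_add ?leq_mul2r ?cover_level_mono ?orbT //.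
exact: height_lt antichain0 ouv.
Qed.

Lemma cover_rank_bound k : (cover_rank k < 4 * n.+1)%N.
Proof.
have lev3 : (cover_level k <= 3)%N.
  by rewrite /cover_level; case: (connect o i k); case: (k == i); case: (k == j).
have -> : (4 * n.+1 = 3 * n.+1 + n.+1)%N by rewrite mulSnr.
by rewrite /cover_rank -addnS leq_add ?ltnS ?height_le // leq_mul2r lev3 orbT.
Qed.

Lemma cover_level_i : cover_level i = 1%N.
Proof. by rewrite /cover_level connect0 eqxx. Qed.

Lemma cover_level_j : cover_level j = 2%N.
Proof.
have ji : j != i by apply/eqP => ji; subst j; apply: (o_acyclic (i := i)); case: ij_cover.
by rewrite /cover_level (connect1 (covers_rel ij_cover)) (negbTE ji) eqxx.
Qed.

Lemma cover_rank_ij : (cover_rank i < cover_rank j)%N.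
Proof. by apply: cover_rank_lt_level; rewrite cover_level_i cover_level_j. Qed.

Lemma cover_rank_apart k : k != i -> k != j ->
  (cover_rank k < cover_rank i)%N \/ (cover_rank j < cover_rank k)%N.
Proof.
move=> ki kj; have [lev_k|lev_k] : cover_level k = 0%N \/ cover_level k = 3%N.
  by rewrite /cover_level (negbTE ki) (negbTE kj); case: (connect o i k); [right | left].
  by left; apply: cover_rank_lt_level; rewrite lev_k cover_level_i.
by right; apply: cover_rank_lt_level; rewrite lev_k cover_level_j.
Qed.

End CoverRank.

End StrictOrder.

Local Open Scope R_scope.

Definition zfloor (r : R) : Z := (up r - 1)%Z.

Lemma zfloor_spec r : IZR (zfloor r) <= r < IZR (zfloor r) + 1.
Proof. by have [h1 h2] := archimed r; rewrite /zfloor minus_IZR; lra. Qed.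

Lemma is_int_opp r : is_int r -> is_int (- r).
Proof. by move=> [z ->]; exists (- z)%Z; rewrite opp_IZR. Qed.

Lemma not_int_between k r : IZR k < r < IZR k + 1 -> ~ is_int r.
Proof.
move=> [h1 h2] [z ez]; subst r; rewrite -plus_IZR in h2.
by apply lt_IZR in h1; apply lt_IZR in h2; lia.
Qed.

Lemma is_int_zfloor r : is_int r -> IZR (zfloor r) = r.
Proof.
move=> [z ->]; have [h1 h2] := zfloor_spec (IZR z); rewrite -plus_IZR in h2.
by apply le_IZR in h1; apply lt_IZR in h2; f_equal; lia.
Qed.

Lemma is_int_small r : is_int r -> -1 < r < 1 -> r = 0.
Proof.
move=> [z ->] [h1 h2]; have h3 : IZR (-1) < IZR z by [].
by apply lt_IZR in h2; apply lt_IZR in h3; have -> : z = 0%Z by lia.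
Qed.

Lemma not_int_cell r : ~ is_int r -> exists k, IZR k < r < IZR k + 1.
Proof.
move=> r_not_int; have [[h1|h1] h2] := zfloor_spec r; first by exists (zfloor r).
by case: r_not_int; exists (zfloor r).
Qed.

Definition same_cell (a b : R) :=
  exists k : Z, IZR k < a < IZR k + 1 /\ IZR k < b < IZR k + 1.

Lemma cell_unique k k' r : IZR k < r < IZR k + 1 -> IZR k' < r < IZR k' + 1 -> k = k'.
Proof.
move=> [a1 a2] [b1 b2].
have h1 : IZR k < IZR (k' + 1) by rewrite plus_IZR; lra.
have h2 : IZR k' < IZR (k + 1) by rewrite plus_IZR; lra.
by apply lt_IZR in h1; apply lt_IZR in h2; lia.
Qed.

Lemma same_cell_trans a b c : same_cell a b -> same_cell b c -> same_cell a c.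
Proof. by move=> [k [h1 h2]] [k' [h3 h4]]; rewrite (cell_unique h3 h2) in h4; exists k. Qed.

Lemma same_cell_shift a b m : same_cell a b -> same_cell (a + IZR m) (b + IZR m).
Proof. by move=> [k hk]; exists (k + m)%Z; rewrite plus_IZR; lra. Qed.

Lemma same_cell_convex a b t :
  same_cell a b -> 0 <= t <= 1 -> ~ is_int ((1 - t) * a + t * b).
Proof.
move=> [k [ha hb]] t01; apply: (not_int_between (k := k)).
by case: (Rle_lt_dec a b) => ab; split; nra.
Qed.

Lemma continuous_same_cell f :
  continuity f -> (forall t, 0 <= t <= 1 -> ~ is_int (f t)) -> same_cell (f 0) (f 1).
Proof.
move=> fc f_not_int; have [k hk] := not_int_cell (f_not_int 0 ltac:(lra)).
have no_crossing m : (f 0 - IZR m) * (f 1 - IZR m) <= 0 -> False.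
  move=> sign; have [t [t01 ft]] := IVT_cor (fun t => f t - IZR m) 0 1
    ltac:(apply: continuity_minus; [exact: fc | reg]) ltac:(lra) sign.
  by apply: (f_not_int t t01); exists m; lra.
exists k; split => //; split.
  by case: (Rlt_le_dec (IZR k) (f 1)) => // h; case: (no_crossing k); nra.
case: (Rlt_le_dec (f 1) (IZR k + 1)) => // h.
by case: (no_crossing (k + 1)%Z); rewrite plus_IZR; nra.
Qed.

Definition shift n (y : 'I_n -> R) (c : 'I_n -> Z) k := y k + IZR (c k).

Definition cell_equiv n (h : rel 'I_n) (x y : 'I_n -> R) :=
  exists c, forall a b, h a b -> same_cell (x b - x a) (shift y c b - shift y c a).

Section SameChamber.
Variables (n : nat) (h : rel 'I_n).

Lemma cell_equiv_same_chamber x y : cell_equiv h x y -> same_chamber h x y.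
Proof.
move=> [c Hc]; exists (fun t k => x k + t * (shift y c k - x k)); split; [|split; [|split]].
- by move=> i; rewrite /shift; reg.
- by apply: functional_extensionality => k; ring.
- by move=> i; exists (c i); rewrite /shift; ring.
- move=> t t0 t1 a b hab; rewrite /on_hyp => /is_int_opp.
  have -> : - (x a + t * (shift y c a - x a) - (x b + t * (shift y c b - x b))) =
    (1 - t) * (x b - x a) + t * (shift y c b - shift y c a) by ring.
  by apply: same_cell_convex (Hc a b hab) _; lra.
Qed.

Lemma same_chamber_cell_equiv x y : same_chamber h x y -> cell_equiv h x y.
Proof.
move=> [gam [gam_cont [gam0 [gam1 gam_off]]]].
set c := fun i => zfloor (gam 1 i - y i).
have shift_end i : shift y c i = gam 1 i by rewrite /shift /c is_int_zfloor //; ring.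
exists c => a b hab; rewrite !shift_end -gam0.
apply: (continuous_same_cell (f := fun t => gam t b - gam t a)).
  exact: continuity_minus.
move=> t [t0 t1] /is_int_opp f_int; apply: (gam_off t t0 t1 a b hab).
by rewrite /on_hyp (_ : gam t a - gam t b = - (gam t b - gam t a)) //; ring.
Qed.

Lemma cell_equiv_trans x y z : cell_equiv h x y -> cell_equiv h y z -> cell_equiv h x z.
Proof.
move=> [c1 H1] [c2 H2]; exists (fun k => c1 k + c2 k)%Z => a b hab.
apply: (same_cell_trans (H1 a b hab)).
have -> : shift y c1 b - shift y c1 a = y b - y a + IZR (c1 b - c1 a).
  by rewrite /shift minus_IZR; ring.
have -> : shift z (fun k => (c1 k + c2 k)%Z) b - shift z (fun k => (c1 k + c2 k)%Z) a =
    shift z c2 b - shift z c2 a + IZR (c1 b - c1 a).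
  by rewrite /shift minus_IZR !plus_IZR; ring.
exact: same_cell_shift (H2 a b hab).
Qed.

End SameChamber.

Definition unit_increasing n (o : rel 'I_n) (z : 'I_n -> R) :=
  forall a b, o a b -> 0 < z b - z a < 1.

Definition has_unit_increasing_lift n (o : rel 'I_n) (y : 'I_n -> R) :=
  exists c, unit_increasing o (shift y c).

Section UnitIncreasing.
Variables (n : nat) (o : rel 'I_n).

Lemma unit_increasing_lift z : unit_increasing o z -> has_unit_increasing_lift o z.
Proof. by move=> z_inc; exists (fun _ => 0%Z) => a b /z_inc; rewrite /shift; lra. Qed.

Lemma plt_increasing (z : 'I_n -> R) :
  (forall a b, o a b -> z a < z b) -> forall a b, plt o a b -> z a < z b.
Proof.
move=> z_inc; have connect_le u v : connect o u v -> z u <= z v.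
  case/connectP=> p; elim: p u => [|w p IH] u /=; first by move=> _ ->; lra.
  by case/andP=> ouw pw lv; have := z_inc _ _ ouw; have := IH w pw lv; lra.
by move=> a b [k [oak ckb]]; have := z_inc _ _ oak; have := connect_le _ _ ckb; lra.
Qed.

Lemma unit_increasing_lt z a b : unit_increasing o z -> o a b -> z a < z b.
Proof. by move=> z_inc /z_inc; lra. Qed.

Lemma unit_increasing_acyclic z : unit_increasing o z -> forall i, ~ plt o i i.
Proof.
by move=> z_inc i lt_ii; have := plt_increasing (fun a b => unit_increasing_lt z_inc) lt_ii; lra.
Qed.

End UnitIncreasing.

Section RankPoint.
Variables (n N : nat) (f : 'I_n -> nat).
Hypothesis f_lt_N : forall k, (f k < N)%N.

Definition rank_point k := INR (f k) / INR N.

Lemma rank_point_lt a b : (f a < f b)%N -> rank_point a < rank_point b.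
Proof.
move=> fab; apply: Rmult_lt_compat_r; last by apply: lt_INR; apply/ltP.
by apply: Rinv_0_lt_compat; apply: lt_0_INR; apply/ltP; exact: leq_ltn_trans (f_lt_N a).
Qed.

Lemma rank_point_bounds k : 0 <= rank_point k < 1.
Proof.
have N_pos : 0 < INR N by apply: lt_0_INR; apply/ltP; exact: leq_ltn_trans (f_lt_N k).
have fk_lt : INR (f k) < INR N by apply: lt_INR; apply/ltP.
have := Rmult_lt_compat_r (/ INR N) _ _ (Rinv_0_lt_compat _ N_pos) fk_lt.
rewrite Rinv_r; last lra.
by have := Rmult_le_pos _ _ (pos_INR (f k)) (Rlt_le _ _ (Rinv_0_lt_compat _ N_pos)); split.
Qed.

Lemma rank_point_unit_increasing (o : rel 'I_n) :
  (forall a b, o a b -> f a < f b)%N -> unit_increasing o rank_point.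
Proof.
move=> f_inc a b /f_inc /rank_point_lt; have := rank_point_bounds a.
by have := rank_point_bounds b; lra.
Qed.

End RankPoint.

Lemma height_point_unit_increasing n (o : rel 'I_n) (A : {set 'I_n}) :
  (forall i, ~ plt o i i) -> antichain o A -> unit_increasing o (rank_point n.+1 (height o A)).
Proof.
move=> o_acyclic anti; apply: rank_point_unit_increasing => [k|a b]; last exact: height_lt.
by rewrite ltnS height_le.
Qed.

Section ToricChamber.
Variables (n : nat) (G o : rel 'I_n).
Hypothesis o_orient : orientation G o.

Lemma unit_increasing_off_arr z : unit_increasing o z -> off_arr G z.
Proof.
move=> z_inc a b Gab; case: o_orient => _ [o_total _].
case/orP: (o_total a b Gab) => /z_inc h.
  by apply: (not_int_between (k := (-1)%Z)); rewrite /=; lra.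
by apply: (not_int_between (k := 0%Z)); rewrite /=; lra.
Qed.

Lemma unit_increasing_edge_lt z i j : unit_increasing o z -> G i j -> (o i j <-> z i < z j).
Proof.
move=> z_inc Gij; split; first exact: unit_increasing_lt.
case: o_orient => _ [o_total _]; case/orP: (o_total i j Gij) => // /z_inc; lra.
Qed.

Lemma unit_increasing_same_chamber x y :
  unit_increasing o x -> has_unit_increasing_lift o y -> same_chamber G x y.
Proof.
move=> x_inc [c y_inc]; apply: cell_equiv_same_chamber; exists c => a b Gab.
case: o_orient => _ [o_total _]; case/orP: (o_total a b Gab) => [oab|oba].
  by exists 0%Z; have := x_inc a b oab; have := y_inc a b oab; rewrite /=; lra.
by exists (-1)%Z; have := x_inc b a oba; have := y_inc b a oba; rewrite /=; lra.
Qed.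

Lemma toric_chamber_lift y : toric_chamber G o y -> has_unit_increasing_lift o y.
Proof.
move=> [x [x01 [_ [x_orient /same_chamber_cell_equiv [c Hc]]]]]; exists c => a b oab.
have Gab : G a b by case: o_orient => o_sub _; exact: o_sub.
have [k [hx hy]] := Hc a b Gab.
have x_ab := proj1 (x_orient a b Gab) oab; have := x01 a; have := x01 b => xb xa.
suff k0 : k = 0%Z by move: hy; rewrite k0 /=; lra.
by apply: (cell_unique hx (k' := 0%Z)); rewrite /=; lra.
Qed.

Hypothesis o_acyclic : forall i, ~ plt o i i.

Let base := rank_point n.+1 (height o set0).

Let base_unit_increasing : unit_increasing o base.
Proof. exact: height_point_unit_increasing o_acyclic (@antichain0 n o). Qed.

Let base_toric_chamber y : same_chamber G base y -> toric_chamber G o y.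
Proof.
move=> base_y; exists base; split; last split; last split => //.
- by move=> i; apply: rank_point_bounds => k; rewrite ltnS height_le.
- exact: unit_increasing_off_arr base_unit_increasing.
- by move=> i j; apply: unit_increasing_edge_lt base_unit_increasing.
Qed.

Lemma toric_chamberP y : toric_chamber G o y <-> has_unit_increasing_lift o y.
Proof.
split; first exact: toric_chamber_lift.
by move=> y_lift; apply/base_toric_chamber/unit_increasing_same_chamber.
Qed.

Lemma is_chamber_toric_chamber : is_chamber G (toric_chamber G o).
Proof.
exists base; split; first exact: unit_increasing_off_arr base_unit_increasing.
move=> y; split; last exact: base_toric_chamber.
by move=> /toric_chamber_lift; apply: unit_increasing_same_chamber.
Qed.

End ToricChamber.

Lemma toric_equiv_iff n (P : rel 'I_n -> Prop) :
  (forall o1 o2, flip_source o1 o2 -> P o1 <-> P o2) ->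
  forall o1 o2, toric_equiv o1 o2 -> P o1 <-> P o2.
Proof.
move=> P_flip o1 o2; elim=> {o1 o2} [o1 o2 /P_flip //|//|o1 o2 _ IH|o1 o2 o3 _ IH1 _ IH2].
  by rewrite IH.
by rewrite IH1 IH2.
Qed.

Lemma flip_source_lift n (o1 o2 : rel 'I_n) y :
  flip_source o1 o2 -> has_unit_increasing_lift o1 y <-> has_unit_increasing_lift o2 y.
Proof.
move=> [v [v_source o2E]]; split.
  move=> [c y_inc]; exists (fun k => if k == v then (c k + 1)%Z else c k) => a b.
  rewrite o2E /shift; case: (eqVneq a v) => [->|av]; case: (eqVneq b v) => [->|bv];
    rewrite ?eqxx /= ?v_source // => oab; have := y_inc _ _ oab; rewrite /shift ?plus_IZR; lra.
have o1E a b : o1 a b = if (a == v) || (b == v) then o2 b a else o2 a b.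
  by rewrite !o2E; case: (a == v); case: (b == v).
move=> [c y_inc]; exists (fun k => if k == v then (c k - 1)%Z else c k) => a b.
rewrite o1E /shift; case: (eqVneq a v) => [->|av]; case: (eqVneq b v) => [->|bv];
  rewrite ?eqxx //=; try by rewrite o2E eqxx ?orbT /= v_source.
all: by move=> oab; have := y_inc _ _ oab; rewrite /shift ?minus_IZR; lra.
Qed.

Lemma toric_equiv_lift n (o1 o2 : rel 'I_n) y :
  toric_equiv o1 o2 -> has_unit_increasing_lift o1 y <-> has_unit_increasing_lift o2 y.
Proof. exact: toric_equiv_iff (fun o1 o2 => @flip_source_lift n o1 o2 y) o1 o2. Qed.

Definition Rltb (r s : R) : bool := if Rlt_dec r s then true else false.

Lemma RltbP r s : reflect (r < s) (Rltb r s).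
Proof. by rewrite /Rltb; case: Rlt_dec => h; constructor. Qed.

Lemma exists_argmax (T : eqType) (s : seq T) (f : T -> R) :
  s != [::] -> exists2 v, v \in s & forall k, k \in s -> f k <= f v.
Proof.
elim: s => // a [|b s] IH _.
  by exists a => [|k]; rewrite ?mem_seq1 // => /eqP ->; lra.
have [v vs v_max] := IH isT; case: (Rle_lt_dec (f a) (f v)) => fav.
  exists v; first by rewrite inE vs orbT.
  by move=> k; rewrite inE => /orP [/eqP ->|/v_max].
exists a => [|k]; first exact: mem_head.
by rewrite inE => /orP [/eqP ->|/v_max]; lra.
Qed.

Section Orientations.
Variables (n : nat) (G : rel 'I_n).
Hypothesis G_simple : simple_graph G.

Lemma orientation_reverse (o1 o2 : rel 'I_n) (P : rel 'I_n) :
  (forall a b, P a b = P b a) -> (forall a b, o2 a b = if P a b then o1 b a else o1 a b) ->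
  orientation G o1 -> orientation G o2.
Proof.
case: G_simple => G_sym _ P_sym o2E [o1_sub [o1_total o1_anti]]; split; [|split] => a b.
- by rewrite o2E; case: (P a b) => // /o1_sub; rewrite G_sym.
- by move=> /o1_total; rewrite !o2E P_sym; case: (P b a); rewrite // orbC.
- by rewrite !o2E P_sym; case: (P b a); rewrite // andbC.
Qed.

Lemma flip_source_orientation (o1 o2 : rel 'I_n) :
  flip_source o1 o2 -> orientation G o1 <-> orientation G o2.
Proof.
move=> [v [_ o2E]]; have P_sym a b : (a == v) || (b == v) = (b == v) || (a == v) by rewrite orbC.
split; apply: (orientation_reverse P_sym) => // a b.
by rewrite !o2E; case: (a == v); case: (b == v).
Qed.

Lemma toric_equiv_orientation (o1 o2 : rel 'I_n) :
  toric_equiv o1 o2 -> orientation G o1 <-> orientation G o2.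
Proof. exact: toric_equiv_iff flip_source_orientation o1 o2. Qed.

Definition induced_orientation (z : 'I_n -> R) : rel 'I_n := fun a b => G a b && Rltb (z a) (z b).

Definition unit_separated (z : 'I_n -> R) :=
  forall a b, G a b -> 0 < z b - z a < 1 \/ 0 < z a - z b < 1.

Lemma induced_orientation_lt z a b : induced_orientation z a b -> z a < z b.
Proof. by case/andP => _ /RltbP. Qed.

Lemma induced_orientation_translate z r :
  induced_orientation (fun k => z k + r) = induced_orientation z.
Proof.
apply: functional_extensionality => a; apply: functional_extensionality => b.
by rewrite /induced_orientation; congr (_ && _); apply/RltbP/RltbP; lra.
Qed.

Lemma induced_orientation_unit_increasing (o : rel 'I_n) z :
  orientation G o -> unit_increasing o z -> induced_orientation z = o.
Proof.
move=> [o_sub [o_total _]] z_inc.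
apply: functional_extensionality => a; apply: functional_extensionality => b.
rewrite /induced_orientation; case oab: (o a b).
  by rewrite (o_sub _ _ oab); apply/RltbP; have := z_inc a b oab; lra.
case Gab: (G a b) => //=; have := o_total a b Gab; rewrite oab /= => /z_inc oba.
by apply/RltbP; lra.
Qed.

Definition lower_at (z : 'I_n -> R) v k := if k == v then z v - 1 else z k.

Section LowerTop.
Variables (z : 'I_n -> R) (v : 'I_n).
Hypotheses (z_sep : unit_separated z) (v_top : forall u, G v u -> z u < z v).

Lemma unit_separated_lower_at : unit_separated (lower_at z v).
Proof.
case: G_simple => G_sym G_irr a b Gab; rewrite /lower_at.
case: (eqVneq a v) => [eav|av]; case: (eqVneq b v) => [ebv|bv]; subst.
- by rewrite G_irr in Gab.
- by have := v_top Gab; have := z_sep Gab; lra.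
- by rewrite G_sym in Gab; have := v_top Gab; have := z_sep Gab; lra.
- exact: z_sep.
Qed.

(* v lies above its neighbours by less than one unit, so lowering it by one puts it below all
   of them. *)
Lemma flip_source_lower_at :
  flip_source (induced_orientation (lower_at z v)) (induced_orientation z).
Proof.
case: G_simple => G_sym G_irr; exists v; split.
  move=> u; rewrite /induced_orientation /lower_at eqxx.
  case: (eqVneq u v) => [->|uv]; first by rewrite G_irr.
  case Guv: (G u v) => //=; apply/RltbP; rewrite G_sym in Guv.
  by have := v_top Guv; have := z_sep Guv; lra.
move=> a b; rewrite /induced_orientation /lower_at.
case: (eqVneq a v) => [->|av]; case: (eqVneq b v) => [->|bv]; rewrite ?eqxx ?orbT //=.
- by rewrite G_irr.
- rewrite (G_sym b v); case Gvb: (G v b) => //=.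
  have := v_top Gvb; have := z_sep Gvb => h1 h2.
  by apply/RltbP/RltbP; lra.
- rewrite (G_sym v a); case Gav: (G a v) => //=; rewrite G_sym in Gav.
  have := v_top Gav; have := z_sep Gav => h1 h2.
  by apply/RltbP/RltbP; lra.
Qed.

End LowerTop.

Definition lower_by (z : 'I_n -> R) (c : 'I_n -> nat) k := z k - INR (c k).

Lemma lower_by_top z c v :
  unit_separated z -> unit_separated (lower_by z c) -> (0 < c v)%N ->
  (forall k, (0 < c k)%N -> z k <= z v) -> forall u, G v u -> z u < z v.
Proof.
move=> z_sep zc_sep cv v_max u Gvu; case: (Rlt_le_dec (z u) (z v)) => // zuv; exfalso.
have [zvu|] := z_sep v u Gvu; last lra.
have cu : c u = 0%N by apply/eqP; rewrite -leqn0 leqNgt; apply/negP => /v_max; lra.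
have cv1 : 1 <= INR (c v) by apply: (le_INR 1); apply/leP.
by case: (zc_sep v u Gvu); rewrite /lower_by cu /=; lra.
Qed.

(* Lowering vertices one unit at a time, always a highest one still to be lowered, is a
   sequence of source-to-sink flips. *)
Lemma lower_by_toric_equiv z c :
  unit_separated z -> unit_separated (lower_by z c) ->
  toric_equiv (induced_orientation z) (induced_orientation (lower_by z c)).
Proof.
have [N] := ubnP (\sum_k c k); elim: N z c => // N IH z c sum_c z_sep zc_sep.
have [/existsP [k0 ck0]|no_pos] := boolP [exists k, 0 < c k]%N; last first.
  have lower0 : lower_by z c = z.
    apply: functional_extensionality => k; rewrite /lower_by.
    have -> : c k = 0%N.
      by apply/eqP; rewrite -leqn0 leqNgt; apply: contra no_pos => ck; apply/existsP; exists k.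
    by rewrite /=; ring.
  by rewrite lower0; apply: rst_refl.
have [|v] := exists_argmax z (s := [seq k <- enum 'I_n | (0 < c k)%N]).
  by apply/eqP => /(congr1 (fun s => k0 \in s)); rewrite mem_filter mem_enum ck0.
rewrite mem_filter mem_enum andbT => cv v_max.
have v_top : forall u, G v u -> z u < z v.
  apply: lower_by_top z_sep zc_sep cv _ => k ck.
  by apply: v_max; rewrite mem_filter mem_enum ck.
set c1 := fun k => if k == v then (c v).-1 else c k.
have lower1 : lower_by (lower_at z v) c1 = lower_by z c.
  apply: functional_extensionality => k; rewrite /lower_by /lower_at /c1.
  case: (eqVneq k v) => [->|//]; rewrite -{2}(prednK cv) S_INR; ring.
have sum_c1 : (\sum_k c1 k < N)%N.
  rewrite (bigD1 v) //= /c1 /= eqxx (eq_bigr c) => [|i /negbTE -> //].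
  by move: sum_c; rewrite (bigD1 v) //= -(prednK cv) addSn ltnS.
have := IH _ _ sum_c1 (unit_separated_lower_at z_sep v_top); rewrite lower1 => /(_ zc_sep).
by apply: rst_trans; apply/rst_sym/rst_step/flip_source_lower_at.
Qed.

(* Translating by an integer vector c amounts to translating every coordinate up by max c
   (which does not change the induced orientation) and then lowering each one to its place. *)
Lemma shift_toric_equiv z (c : 'I_n -> Z) :
  unit_separated z -> unit_separated (shift z c) ->
  toric_equiv (induced_orientation z) (induced_orientation (shift z c)).
Proof.
move=> z_sep zc_sep; set M := Z.of_nat (\max_k Z.to_nat (c k)).
have c_le k : (c k <= M)%Z.
  by have /leP := leq_bigmax (F := fun k => Z.to_nat (c k)) k; rewrite /M; lia.
set z2 := fun k => z k + IZR M; set d := fun k => Z.to_nat (M - c k).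
have lower_d : lower_by z2 d = shift z c.
  apply: functional_extensionality => k; rewrite /lower_by /z2 /d /shift INR_IZR_INZ.
  by rewrite Z2Nat.id ?minus_IZR; [ring | have := c_le k; lia].
have z2_sep : unit_separated z2 by move=> a b /z_sep; rewrite /z2; lra.
have := lower_by_toric_equiv (c := d) z2_sep; rewrite lower_d => /(_ zc_sep).
by rewrite /z2 induced_orientation_translate.
Qed.

Lemma toric_chamber_frac (o : rel 'I_n) y : orientation G o -> toric_chamber G o y ->
  exists w, [/\ forall k, 0 <= w k < 1, congr_torus w y & toric_equiv o (induced_orientation w)].
Proof.
move=> o_orient /(toric_chamber_lift o_orient) [c y_inc].
set z := shift y c; set w := shift z (fun k => (- zfloor (z k))%Z).
have w01 k : 0 <= w k < 1 by rewrite /w /shift opp_IZR; have := zfloor_spec (z k); lra.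
have z_sep : unit_separated z.
  case: o_orient => _ [o_total _] a b Gab.
  by case/orP: (o_total a b Gab) => oab; [left | right]; apply: y_inc.
have w_sep : unit_separated w.
  move=> a b Gab; suff : w b - w a <> 0 by have := w01 a; have := w01 b; lra.
  move=> wab; have : is_int (z b - z a).
    by exists (zfloor (z b) - zfloor (z a))%Z; move: wab; rewrite /w /shift minus_IZR !opp_IZR; lra.
  case: (z_sep a b Gab) => h.
    by apply: (not_int_between (k := 0%Z)); rewrite /=; lra.
  by apply: (not_int_between (k := (-1)%Z)); rewrite /=; lra.
exists w; split => //.
  by move=> k; exists (c k - zfloor (z k))%Z; rewrite /w /z /shift minus_IZR opp_IZR; ring.
by rewrite -(induced_orientation_unit_increasing o_orient y_inc); apply: shift_toric_equiv.
Qed.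

Section TorClosure.
Variable o : rel 'I_n.
Hypothesis o_acyc : acyclic_orientation G o.

Lemma comp_tor_closure_edge i j :
  (forall o', toric_equiv o o' -> comp_edge o' i j) -> tor_closure_edge G o i j.
Proof.
case: o_acyc => o_orient o_acyclic comp_all; case Gij: (G i j); [by left | right; split].
  by apply/eqP => ij; subst j; case: (comp_all o (rst_refl _ _ _)) => /o_acyclic.
move=> y /(toric_chamber_frac o_orient) [w [w01 w_y equiv_w]] y_ij.
have w_ij : w i = w j.
  apply: Rminus_diag_uniq; apply: is_int_small; last by have := w01 i; have := w01 j; lra.
  case: (w_y i) (w_y j) y_ij => [zi ei] [zj ej] [zij eij].
  by exists (zi - zj + zij)%Z; rewrite plus_IZR minus_IZR; lra.
have w_lt := plt_increasing (@induced_orientation_lt w).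
by case: (comp_all _ equiv_w) => /w_lt; lra.
Qed.

Lemma tor_closure_edge_comp i j :
  tor_closure_edge G o i j -> forall o', toric_equiv o o' -> comp_edge o' i j.
Proof.
case: o_acyc => o_orient o_acyclic [Gij|[ij no_hyp]] o' equiv_o'.
  have [_ [o'_total _]] : orientation G o' by rewrite -(toric_equiv_orientation equiv_o').
  by case/orP: (o'_total i j Gij) => /rel_plt; [left | right].
apply: NNPP => incomp.
have o'_acyclic : forall k, ~ plt o' k k.
  have [c o'_inc] := proj1 (toric_equiv_lift _ equiv_o')
    (unit_increasing_lift (height_point_unit_increasing o_acyclic (@antichain0 n o))).
  exact: unit_increasing_acyclic o'_inc.
set x := rank_point n.+1 (height o' [set i; j]).
have x_inc := height_point_unit_increasing o'_acyclic (antichain2 o'_acyclic incomp).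
apply: (no_hyp x).
  by apply/(toric_chamberP o_orient o_acyclic)/(toric_equiv_lift _ equiv_o')/unit_increasing_lift.
by exists 0%Z; rewrite /x /rank_point (height_eq _ (i := i) (j := j)) ?inE ?eqxx ?orbT //=; ring.
Qed.

End TorClosure.

End Orientations.

Definition remove_edge n (G : rel 'I_n) i j : rel 'I_n :=
  fun a b => G a b && ~~ ((a == i) && (b == j) || (a == j) && (b == i)).

Lemma simple_graph_remove_edge n (G : rel 'I_n) i j :
  simple_graph G -> simple_graph (remove_edge G i j).
Proof.
case=> G_sym G_irr; split => [a b|a]; last by rewrite /remove_edge G_irr.
by rewrite /remove_edge G_sym; case: (a == i); case: (a == j); case: (b == i); case: (b == j).
Qed.

(* Sliding x_j down to x_i crosses no hyperplane of G minus {i, j}. *)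
Lemma collapse_cell_equiv n (G : rel 'I_n) (r : 'I_n -> R) i j :
  simple_graph G -> (forall k, 0 <= r k < 1) -> off_arr G r -> r i < r j ->
  (forall k, k != i -> k != j -> r k < r i \/ r j < r k) ->
  cell_equiv (remove_edge G i j) r (fun k => if k == j then r i else r k).
Proof.
move=> [_ G_irr] r01 r_off rij r_apart.
exists (fun _ => 0%Z) => a b /andP [Gab not_ij]; rewrite /shift /= !Rplus_0_r.
have ri := r01 i; have rj := r01 j; have ra := r01 a; have rb := r01 b.
case: (eqVneq a j) => [eaj|aj]; case: (eqVneq b j) => [ebj|bj]; subst.
- by rewrite G_irr in Gab.
- have bi : b != i by apply: contraNneq not_ij => ->; rewrite !eqxx orbT.
  by case: (r_apart b bi bj) => h; [exists (-1)%Z | exists 0%Z]; rewrite /=; lra.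
- have ai : a != i by apply: contraNneq not_ij => ->; rewrite !eqxx.
  by case: (r_apart a ai aj) => h; [exists 0%Z | exists (-1)%Z]; rewrite /=; lra.
- have [k hk] : exists k, IZR k < r b - r a < IZR k + 1.
    by apply: not_int_cell => /is_int_opp; rewrite Ropp_minus_distr; exact: r_off.
  by exists k.
Qed.

Section TorHasse.
Variables (n : nat) (G o K : rel 'I_n).
Hypotheses (G_simple : simple_graph G) (o_acyc : acyclic_orientation G o).
Hypothesis K_hasse : is_tor_hasse G o K.

Lemma tor_hasse_sub_graph i j : K i j -> G i j.
Proof.
case: o_acyc K_hasse => o_orient o_acyclic [_ K_chamber].
have [K_G _] := proj1 (K_chamber G G_simple) (is_chamber_toric_chamber o_orient o_acyclic).
exact: K_G.
Qed.

Lemma tor_hasse_remove_edge i j : ~~ K i j -> is_chamber (remove_edge G i j) (toric_chamber G o).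
Proof.
case: K_hasse => [[K_sym _] K_chamber] not_Kij.
apply/(K_chamber _ (simple_graph_remove_edge i j G_simple)); split => a b.
  move=> Kab; rewrite /remove_edge (tor_hasse_sub_graph Kab) /=.
  apply/negP => /orP [] /andP [/eqP ea /eqP eb]; subst; first by rewrite Kab in not_Kij.
  by rewrite K_sym Kab in not_Kij.
by case/andP => Gab _; left.
Qed.

Lemma covers_tor_hasse i j : covers o i j -> K i j.
Proof.
case: o_acyc => o_orient o_acyclic ij_cover; apply/negPn/negP.
move=> /tor_hasse_remove_edge [xH [_ H_chamber]].
have oij := covers_rel ij_cover.
have ij : i != j by apply/eqP => ij; subst j; exact: o_acyclic (rel_plt oij).
set f := cover_rank o i j; have f_lt k : (f k < 4 * n.+1)%N by apply: cover_rank_bound.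
set r := rank_point (4 * n.+1) f.
have r_inc : unit_increasing o r.
  apply: (rank_point_unit_increasing f_lt); exact: (cover_rank_lt o_acyclic ij_cover).
set q := fun k => if k == j then r i else r k.
have r_q : cell_equiv (remove_edge G i j) r q.
  apply: collapse_cell_equiv => //.
  - exact: rank_point_bounds.
  - exact: unit_increasing_off_arr r_inc.
  - by apply: (rank_point_lt f_lt); apply: cover_rank_ij.
  - move=> k ki kj; case: (cover_rank_apart o_acyclic ij_cover ki kj) => h;
      [left | right]; exact: (rank_point_lt f_lt).
have q_chamber : toric_chamber G o q.
  apply/H_chamber/cell_equiv_same_chamber/(cell_equiv_trans _ r_q)/same_chamber_cell_equiv.
  by apply/H_chamber/(toric_chamberP o_orient o_acyclic)/unit_increasing_lift.
have [c q_inc] := toric_chamber_lift o_orient q_chamber.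
have := q_inc i j oij; rewrite /shift /q eqxx (negbTE ij) => h.
apply: (not_int_between (k := 0%Z) (r := IZR (c j) - IZR (c i))); first by rewrite /=; lra.
by exists (c j - c i)%Z; rewrite minus_IZR.
Qed.

End TorHasse.

Theorem mainTheorem8 (n : nat) (G o K : rel 'I_n) :
  simple_graph G -> acyclic_orientation G o -> is_tor_hasse G o K ->
  (forall i j, hasse_edge o i j -> K i j) /\
  (forall i j, K i j -> tor_closure_edge G o i j) /\
  (forall i j, tor_closure_edge G o i j <->
     (forall o', toric_equiv o o' -> comp_edge o' i j)).
Proof.
move=> G_simple o_acyc K_hasse; have cover_K := covers_tor_hasse G_simple o_acyc K_hasse.
split; [|split].
- move=> i j [/cover_K //|/cover_K].
  by case: K_hasse => [[K_sym _] _]; rewrite K_sym.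
- by move=> i j /(tor_hasse_sub_graph G_simple o_acyc K_hasse); left.
- by move=> i j; split; [exact: tor_closure_edge_comp | exact: comp_tor_closure_edge].
Qed.
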